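(* $\mathsf{Seq}\vdash\exists y\,\forall x\,\neg\exists v_1v_2\,[\,(v_1\vdash x)\circ v_2=y\,]$.
   Context: $\mathsf{Seq}$ is the theory in the language $\{e,\vdash,\circ\}$ ($e$ constant, $\vdash$ and $\circ$ binary functions) with axioms: ($\mathsf{Seq}_1$) $\forall xy[x\vdash y\neq e]$; ($\mathsf{Seq}_2$) $\forall x_1x_2y_1y_2[x_1\vdash x_2=y_1\vdash y_2\rightarrow(x_1=y_1\wedge x_2=y_2)]$; ($\mathsf{Seq}_3$) $\forall x[x\circ e=x]$; ($\mathsf{Seq}_4$) $\forall xyz[x\circ(y\vdash z)=(x\circ y)\vdash z]$; ($\mathsf{Seq}_5$) $\forall x[x=e\vee\exists yz[x=y\vdash z]]$. The claimed sentence is the translation of the empty-set axiom $\exists y\forall x[x\notin y]$ of adjunctive set theory under the translation $(x\in y)^\tau=\exists v_1v_2[(v_1\vdash x)\circ v_2=y]$. *)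

(* Models of the first-order theory Seq in the language
   {e, |-, o}: a carrier with a constant and two binary operations satisfying
   the axioms Seq1..Seq5. "Seq |- phi" is rendered semantically as
   "phi holds in every model of Seq" (equivalent by Goedel completeness). *)

Record SeqModel : Type := {
  carrier :> Type;
  e : carrier;
  tu : carrier -> carrier -> carrier;   (* x |- y *)
  co : carrier -> carrier -> carrier;   (* x o y *)
  Seq1 : forall x y, tu x y <> e;
  Seq2 : forall x1 x2 y1 y2, tu x1 x2 = tu y1 y2 -> x1 = y1 /\ x2 = y2;
  Seq3 : forall x, co x e = x;
  Seq4 : forall x y z, co x (tu y z) = tu (co x y) z;
  Seq5 : forall x, x = e \/ exists y z, x = tu y z
}.


Lemma co_eq_e (M : SeqModel) (w z : M) : co M w z = e M -> w = e M /\ z = e M.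
Proof.
  intros Hwz.
  destruct (Seq5 M z) as [Hz | [a [b Hz]]]; subst z.
  - rewrite Seq3 in Hwz. split; [exact Hwz | reflexivity].
  - rewrite Seq4 in Hwz. destruct (Seq1 M _ _ Hwz).
Qed.

Theorem lemma3 : forall M : SeqModel,
  exists y : M, forall x : M,
    ~ (exists v1 v2 : M, co M (tu M v1 x) v2 = y).
Proof.
  intros M. exists (e M). intros x [v1 [v2 H]].
  destruct (co_eq_e M _ _ H) as [Htu _].
  exact (Seq1 M _ _ Htu).
Qed.
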